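(* Let $G$ be a (not necessarily strongly connected) directed network on node set $\mathcal{V}$, and let $G^o$ be the extended network. Let $F^{\{o\}}=(I-P_{\mathcal{V}\mathcal{V}})^{-1}$, where $P$ is the transition matrix of $G^o$. Then: (i) for all $s,t\in\mathcal{V}$, $F^{\{o\}}_{st}\neq 0$ if and only if $t$ is reachable from $s$ in $G$. (ii) Let $\mathcal{F}\subseteq\mathcal{V}$ be a nonempty set of failed nodes and $\mathcal{S}=\mathcal{F}\cup\{o\}$; then $F^{\{o\}}_{\mathcal{F}\mathcal{F}}$ is invertible, and for $s,t\in\mathcal{V}\setminus\mathcal{F}$ the quantity $$\boldsymbol{F}_{st\mathcal{S}}=F^{\{o\}}_{st}-F^{\{o\}}_{s\mathcal{F}}\big(F^{\{o\}}_{\mathcal{F}\mathcal{F}}\big)^{-1}F^{\{o\}}_{\mathcal{F}t}$$ is nonzero if and only if $t$ is reachable from $s$ in the network obtained from $G$ by deleting the nodes of $\mathcal{F}$.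
   Context: $G$ has a nonnegative affinity matrix $A$ ($a_{ij}>0$ iff there is an edge from $i$ to $j$). The extended network $G^o$ is obtained by adding a new node $o$ and an edge of positive weight from every node of $\mathcal{V}$ to $o$; the random walk on $G^o$ has transition matrix $P=D^{-1}A^o$ (row-normalized affinity of $G^o$), and $o$ is treated as the target (absorbing) node. $P_{\mathcal{V}\mathcal{V}}$ is the submatrix of $P$ on rows and columns $\mathcal{V}$, so $F^{\{o\}}_{st}$ is the expected number of visits to $t$ before hitting $o$ for the walk started at $s$. $F^{\{o\}}_{s\mathcal{F}}$, $F^{\{o\}}_{\mathcal{F}\mathcal{F}}$, $F^{\{o\}}_{\mathcal{F}t}$ denote the corresponding row vector, submatrix and column vector. A node $t$ is reachable from $s$ if there is a directed path from $s$ to $t$ (each node being reachable from itself). *)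

From HB Require Import structures.
From mathcomp Require Import all_boot all_order all_algebra.
Set Implicit Arguments. Unset Strict Implicit. Unset Printing Implicit Defensive.
Import Order.TTheory GRing.Theory Num.Theory.
Local Open Scope ring_scope.

(* Node set V = 'I_n.  A : affinity matrix of G (a_ij > 0 iff edge i -> j).
   w i > 0 : weight of the added edge i -> o in the extended network G^o. *)

Definition dego (R : realFieldType) (n : nat) (A : 'M[R]_n) (w : 'I_n -> R)
  (i : 'I_n) : R := \sum_(j < n) A i j + w i.

(* P_VV : restriction to V x V of the transition matrix P = D^{-1} A^o of G^o *)
Definition PVV (R : realFieldType) (n : nat) (A : 'M[R]_n) (w : 'I_n -> R)
  : 'M[R]_n := \matrix_(i, j) (A i j / dego A w i).

Definition Fo (R : realFieldType) (n : nat) (A : 'M[R]_n) (w : 'I_n -> R)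
  : 'M[R]_n := invmx (1%:M - PVV A w).

Definition edgeG (R : realFieldType) (n : nat) (A : 'M[R]_n) : rel 'I_n :=
  fun i j => 0 < A i j.

Definition reachable (R : realFieldType) (n : nat) (A : 'M[R]_n) (s t : 'I_n)
  : bool := connect (edgeG A) s t.

Definition edgeG_del (R : realFieldType) (n : nat) (A : 'M[R]_n)
  (Fs : {set 'I_n}) : rel 'I_n :=
  fun i j => [&& i \notin Fs, j \notin Fs & 0 < A i j].

Definition reachable_del (R : realFieldType) (n : nat) (A : 'M[R]_n)
  (Fs : {set 'I_n}) (s t : 'I_n) : bool := connect (edgeG_del A Fs) s t.

Definition subFF (R : realFieldType) (n : nat) (M : 'M[R]_n) (Fs : {set 'I_n})
  : 'M[R]_#|Fs| := \matrix_(i, j) M (enum_val i) (enum_val j).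
Definition rowSF (R : realFieldType) (n : nat) (M : 'M[R]_n) (Fs : {set 'I_n})
  (s : 'I_n) : 'rV[R]_#|Fs| := \row_j M s (enum_val j).
Definition colFT (R : realFieldType) (n : nat) (M : 'M[R]_n) (Fs : {set 'I_n})
  (t : 'I_n) : 'cV[R]_#|Fs| := \col_i M (enum_val i) t.

Definition Fschur (R : realFieldType) (n : nat) (M : 'M[R]_n) (Fs : {set 'I_n})
  (s t : 'I_n) : R :=
  M s t - (rowSF M Fs s *m invmx (subFF M Fs) *m colFT M Fs t) 0 0.

(* P := P_VV has nonnegative entries and row sums < 1, since every node leaks
   into o.  A minimum principle (at a minimising node, y >= P y forces y >= 0)
   makes I - P invertible and shows that the column y = F e_t, the solution of
   y = e_t + P y, is nonnegative; it is positive along paths of G into t, and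
   the same extremal argument at a maximiser among the nodes that cannot reach t
   forces y = 0 there.  For (ii), the column z = F e_t - F_(.F) F_FF^-1 F_(Ft)
   vanishes on F and solves the same equation for P with the rows and columns
   of F removed, so it is a column of the Green matrix of G - F and (i)
   applies; a kernel vector c of F_FF likewise yields a harmonic vector
   F_(.F) c of G - F, which must vanish. *)

From HB Require Import structures.
From mathcomp Require Import all_boot all_order all_algebra.
Import Order.TTheory GRing.Theory Num.Theory.
Local Open Scope ring_scope.
Set Implicit Arguments. Unset Strict Implicit. Unset Printing Implicit Defensive.

Lemma unitmx_ker0 (R : fieldType) m (M : 'M[R]_m) :
  (forall c : 'cV_m, M *m c = 0 -> c = 0) -> M \in unitmx.
Proof.
move=> ker0; rewrite unitmxE unitfE -det_tr; apply/det0P => -[v + vM0].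
by rewrite -trmx_eq0 (ker0 v^T) ?eqxx // -[M]trmxK -trmx_mul vM0 trmx0.
Qed.

Section Resolvent.
Variables (R : comUnitRingType) (n : nat) (P : 'M[R]_n).
Hypothesis unit_1B : 1%:M - P \in unitmx.

Lemma invmx_1B_mul (c : 'cV_n) :
  invmx (1%:M - P) *m c = c + P *m (invmx (1%:M - P) *m c).
Proof. by rewrite -{2}(mulKVmx unit_1B c) mulmxBl mul1mx subrK. Qed.

Lemma poisson_invmx (c y : 'cV_n) : y = c + P *m y -> y = invmx (1%:M - P) *m c.
Proof.
by move=> yE; rewrite -[y](mulKmx unit_1B) mulmxBl mul1mx {1}yE addrK.
Qed.

End Resolvent.

Definition supp_rel (R : numDomainType) n (P : 'M[R]_n) : rel 'I_n :=
  fun i j => 0 < P i j.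

Section Substochastic.
Variables (R : realFieldType) (n : nat) (P : 'M[R]_n).
Hypothesis P_ge0 : forall i j, 0 <= P i j.
Hypothesis P_rowsum_lt1 : forall i, \sum_j P i j < 1.

Lemma le0_of_le_rowsum_mul k (x : R) : x <= (\sum_j P k j) * x -> x <= 0.
Proof.
by rewrite -subr_ge0 -{2}[x]mul1r -mulrBl nmulr_rge0 // subr_lt0.
Qed.

Lemma superharmonic_ge0 (y : 'cV[R]_n) :
  (forall i, (P *m y) i 0 <= y i 0) -> forall i, 0 <= y i 0.
Proof.
move=> super i.
have [k _ kmin] := @arg_minP _ _ _ i predT (fun j => y j 0) isT.
apply: (le_trans _ (kmin i isT)); rewrite -oppr_le0.
apply: (@le0_of_le_rowsum_mul k); rewrite mulrN lerN2 mulr_suml.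
apply: le_trans (super k); rewrite mxE; apply: ler_sum => j _.
by rewrite ler_wpM2l ?kmin.
Qed.

Lemma harmonic_eq0 (y : 'cV[R]_n) : y = P *m y -> y = 0.
Proof.
have ge0 (z : 'cV[R]_n) : z = P *m z -> forall i, 0 <= z i 0.
  by move=> zE; apply: superharmonic_ge0 => i; rewrite -zE.
move=> yE; apply/matrixP => i j; rewrite ord1 mxE; apply/eqP.
rewrite eq_le ge0 // andbT -oppr_ge0.
by have := ge0 (- y) _ i; rewrite mxE; apply; rewrite mulmxN -yE.
Qed.

Lemma unitmx_1B : 1%:M - P \in unitmx.
Proof.
apply: unitmx_ker0 => y /eqP; rewrite mulmxBl mul1mx subr_eq0 => /eqP.
exact: harmonic_eq0.
Qed.

Section GreenColumn.
Variables (t : 'I_n) (y : 'cV[R]_n).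
Hypothesis yE : y = delta_mx t 0 + P *m y.

Lemma green_ge0 i : 0 <= y i 0.
Proof.
by apply: superharmonic_ge0 => {}i; rewrite {2}yE [X in _ <= X]mxE lerDr mxE ler0n.
Qed.

Lemma green_gt0 s : connect (supp_rel P) s t -> 0 < y s 0.
Proof.
have Py_ge0 i : 0 <= (P *m y) i 0.
  by rewrite mxE sumr_ge0 // => j _; rewrite mulr_ge0 ?green_ge0.
move=> /connectP[p]; elim: p s => [|k p IHp] s /=.
  by move=> _ <-; rewrite yE mxE ltr_pwDl // mxE !eqxx ltr01.
move=> /andP[Psk path_kt] last_t; rewrite yE mxE ltr_wpDl ?mxE ?ler0n //.
rewrite (bigD1 k) //= ltr_wpDr ?mulr_gt0 ?IHp //.
by apply: sumr_ge0 => j _; rewrite mulr_ge0 ?green_ge0.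
Qed.

Lemma green_eq0 s : ~~ connect (supp_rel P) s t -> y s 0 = 0.
Proof.
move=> Cs; pose C i := ~~ connect (supp_rel P) i t.
have [k Ck kmax] := @arg_maxP _ _ _ s C (fun j => y j 0) Cs.
apply/eqP; rewrite eq_le green_ge0 andbT (le_trans (kmax s Cs)) //.
have kt : (k == t) = false.
  by apply: contraNF Ck => /eqP->; rewrite connect0.
apply: (@le0_of_le_rowsum_mul k); rewrite {1}yE !mxE kt add0r mulr_suml.
apply: ler_sum => j _; have [Pkj|] := boolP (0 < P k j).
  rewrite ler_wpM2l //; apply: kmax; apply: contra Ck => j_t.
  exact: connect_trans (connect1 Pkj) j_t.
by rewrite lt_def P_ge0 andbT negbK => /eqP->; rewrite !mul0r.
Qed.

Lemma green_neq0 s : y s 0 != 0 <-> connect (supp_rel P) s t.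
Proof.
split; first by apply: contraNT => /green_eq0->.
by move/green_gt0; rewrite lt0r => /andP[].
Qed.

End GreenColumn.

Lemma invmx_1B_neq0 s t :
  invmx (1%:M - P) s t != 0 <-> connect (supp_rel P) s t.
Proof.
have := @green_neq0 t (col t (invmx (1%:M - P))) _ s; rewrite mxE; apply.
by rewrite colE {1}invmx_1B_mul ?unitmx_1B.
Qed.

End Substochastic.

Section Deletion.
Variables (R : realFieldType) (n : nat) (Fs : {set 'I_n}) (P : 'M[R]_n).

Definition delmx : 'M[R]_n :=
  \matrix_(i, j) if (i \notin Fs) && (j \notin Fs) then P i j else 0.

(* Extension by zero from vectors indexed by Fs, so that F_(FF) is
   inclmx^T *m F *m inclmx. *)
Definition inclmx : 'M[R]_(n, #|Fs|) := colsub enum_val 1%:M.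

Lemma inclmx_mul_out (b : 'cV_#|Fs|) i : i \notin Fs -> (inclmx *m b) i 0 = 0.
Proof.
move=> iF; rewrite mxE big1 // => k _; rewrite !mxE.
by case: eqP => [iE | _]; [rewrite iE enum_valP in iF | rewrite mul0r].
Qed.

Lemma tr_inclmx_mul p (M : 'M[R]_(n, p)) : inclmx^T *m M = rowsub enum_val M.
Proof. by rewrite trmx_mxsub trmx1 -rowsubE. Qed.

Lemma tr_inclmx_mul_eq0 (y : 'cV[R]_n) :
  inclmx^T *m y = 0 -> forall i, i \in Fs -> y i 0 = 0.
Proof.
rewrite tr_inclmx_mul => /matrixP yF i iF.
by have := yF (enum_rank_in iF i) 0; rewrite !mxE enum_rankK_in.
Qed.

Lemma tr_inclmxK : inclmx^T *m inclmx = 1%:M.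
Proof.
by rewrite tr_inclmx_mul; apply/matrixP => i j; rewrite !mxE (inj_eq enum_val_inj).
Qed.

Lemma subFFE (M : 'M[R]_n) : subFF M Fs = inclmx^T *m M *m inclmx.
Proof.
by rewrite tr_inclmx_mul mulmx_colsub mulmx1; apply/matrixP => i j; rewrite !mxE.
Qed.

Lemma colFTE (M : 'M[R]_n) t : colFT M Fs t = inclmx^T *m col t M.
Proof. by rewrite tr_inclmx_mul; apply/matrixP => i j; rewrite !mxE. Qed.

Lemma rowSFE (M : 'M[R]_n) s : rowSF M Fs s = row s (M *m inclmx).
Proof. by rewrite mulmx_colsub mulmx1; apply/matrixP => i j; rewrite !mxE. Qed.

Lemma delmx_poisson (b : 'cV_#|Fs|) (c y : 'cV_n) :
    (forall i, i \in Fs -> c i 0 = 0) -> inclmx^T *m y = 0 ->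
  y = c + inclmx *m b + P *m y -> y = c + delmx *m y.
Proof.
move=> cF /tr_inclmx_mul_eq0 yF yE; apply/matrixP => i j0; rewrite ord1 !mxE.
have [iF | iF] := boolP (i \in Fs).
  by rewrite yF // cF // add0r big1 // => j _; rewrite mxE iF mul0r.
rewrite {1}yE [LHS]mxE [(c + _) i 0]mxE inclmx_mul_out // addr0 mxE.
congr (_ + _); apply: eq_bigr => j _; rewrite mxE iF /=.
by have [jF | //] := boolP (j \in Fs); rewrite yF // !mulr0.
Qed.

Section DeletedSubstochastic.
Hypothesis P_ge0 : forall i j, 0 <= P i j.
Hypothesis P_rowsum_lt1 : forall i, \sum_j P i j < 1.

Lemma delmx_ge0 i j : 0 <= delmx i j.
Proof. by rewrite mxE; case: ifP. Qed.

Lemma delmx_rowsum_lt1 i : \sum_j delmx i j < 1.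
Proof.
apply: le_lt_trans (P_rowsum_lt1 i); apply: ler_sum => j _.
by rewrite mxE; case: ifP.
Qed.

Let F := invmx (1%:M - P).

Lemma subFF_unitmx : subFF F Fs \in unitmx.
Proof.
apply: unitmx_ker0 => b; rewrite subFFE -!mulmxA => FFb0.
pose y := F *m (inclmx *m b).
have yE : y = 0 + inclmx *m b + P *m y by rewrite add0r {1}/y /F invmx_1B_mul ?unitmx_1B.
have y0 : y = 0.
  apply: (harmonic_eq0 delmx_ge0 delmx_rowsum_lt1); rewrite -[delmx *m y]add0r.
  by apply: delmx_poisson yE => [i _|]; rewrite ?mxE.
move: yE; rewrite y0 mulmx0 !addr0 add0r => /esym inclb0.
by rewrite -[b]mul1mx -tr_inclmxK -mulmxA inclb0 mulmx0.
Qed.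

Lemma Fschur_invmx s t : s \notin Fs -> t \notin Fs ->
  Fschur F Fs s t = invmx (1%:M - delmx) s t.
Proof.
move=> sF tF; pose cm := invmx (subFF F Fs) *m colFT F Fs t.
pose z := F *m (delta_mx t 0 - inclmx *m cm).
have zF : inclmx^T *m z = 0.
  rewrite /z !mulmxBr -colE -colFTE !mulmxA -subFFE -mulmxA.
  by rewrite mulKVmx ?subFF_unitmx ?subrr.
have zE : z = delta_mx t 0 + inclmx *m (- cm) + P *m z.
  by rewrite mulmxN {1}/z invmx_1B_mul ?unitmx_1B.
have tFs i : i \in Fs -> (delta_mx t 0 : 'cV[R]_n) i 0 = 0.
  by move=> iF; rewrite mxE; case: eqP => // iE; rewrite iE (negPf tF) in iF.
have -> : invmx (1%:M - delmx) s t = z s 0.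
  have U := unitmx_1B delmx_ge0 delmx_rowsum_lt1.
  by rewrite (poisson_invmx U (delmx_poisson tFs zF zE)) -colE mxE.
rewrite /Fschur rowSFE -mulmxA -row_mul mxE /z mulmxBr -colE mulmxA.
by rewrite -!mulmxA [in RHS]mxE [col _ _ _ _]mxE [X in _ = _ + X]mxE.
Qed.

End DeletedSubstochastic.
End Deletion.

Section ExtendedNetwork.
Variables (R : realFieldType) (n : nat) (A : 'M[R]_n) (w : 'I_n -> R).
Hypothesis A_ge0 : forall i j, 0 <= A i j.
Hypothesis w_gt0 : forall i, 0 < w i.

Lemma dego_gt0 i : 0 < dego A w i.
Proof. by rewrite ltr_wpDl ?w_gt0 //; apply: sumr_ge0. Qed.

Lemma PVV_ge0 i j : 0 <= PVV A w i j.
Proof. by rewrite mxE divr_ge0 ?A_ge0 // ltW ?dego_gt0. Qed.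

Lemma PVV_rowsum_lt1 i : \sum_j PVV A w i j < 1.
Proof.
under eq_bigr do rewrite mxE.
by rewrite -mulr_suml ltr_pdivrMr ?dego_gt0 // mul1r ltrDl.
Qed.

Lemma supp_rel_PVV : supp_rel (PVV A w) =2 edgeG A.
Proof. by move=> i j; rewrite /supp_rel mxE pmulr_lgt0 ?invr_gt0 ?dego_gt0. Qed.

Lemma supp_rel_delmx_PVV Fs : supp_rel (delmx Fs (PVV A w)) =2 edgeG_del A Fs.
Proof.
move=> i j; rewrite /supp_rel /edgeG_del mxE.
by case: (i \in Fs) (j \in Fs) => [] []; rewrite ?ltxx //; apply: supp_rel_PVV.
Qed.

End ExtendedNetwork.

Theorem mainTheorem18 (R : realFieldType) (n : nat) (A : 'M[R]_n)
  (w : 'I_n -> R)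
  (hA : forall i j, 0 <= A i j) (hw : forall i, 0 < w i) :
  (1%:M - PVV A w \in unitmx) /\
  (forall s t : 'I_n, Fo A w s t != 0 <-> reachable A s t) /\
  (forall Fs : {set 'I_n}, Fs != set0 ->
     subFF (Fo A w) Fs \in unitmx /\
     (forall s t : 'I_n, s \notin Fs -> t \notin Fs ->
        (Fschur (Fo A w) Fs s t != 0 <-> reachable_del A Fs s t))).
Proof.
have P_ge0 := PVV_ge0 hA hw; have P_lt1 := PVV_rowsum_lt1 hA hw.
split; first exact: unitmx_1B.
split=> [s t | Fs _].
  by rewrite /reachable -(eq_connect (supp_rel_PVV hA hw)); apply: invmx_1B_neq0.
split=> [|s t sF tF]; first exact: subFF_unitmx.
rewrite /Fo Fschur_invmx // /reachable_del -(eq_connect (supp_rel_delmx_PVV hA hw Fs)).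
by apply: invmx_1B_neq0; [apply: delmx_ge0 | apply: delmx_rowsum_lt1].
Qed.
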